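(* Let $N = \{1,\dots,n\}$ with $n \geq 2$, and for each $i \in N$ let $\pi_i : 2^{N \setminus\{i\}} \to \mathbb{R}_{\geq 0}$. For any directed graph $G = (N,A)$ (possibly cyclic) put $\pi^*(G) = \prod_{i} \pi_i(A_i)$ with $A_i = \{j : ji \in A\}$, and let $\pi(G) = \pi^*(G)$ if $G$ is acyclic and $\pi(G) = 0$ otherwise. Let $(q_{ij})$ be a probability distribution over ordered pairs $(i,j)$ of distinct nodes. For a DAG $G$ and ordered pair $ij$, let $G^{ij}$ be obtained from $G$ by removing arc $ij$ if $ij \in A$, by reversing arc $ji$ into $ij$ if $ji \in A$, and by adding arc $ij$ otherwise. For a DAG $G$ with $\pi(G) > 0$ define $b_{ij} = q_{ij}\min\{1, \pi^*(G^{ij})/\pi(G)\}$ and $b = \sum_{ij} b_{ij}$, and define a Markov chain on $\Omega = \{G \text{ DAG on } N : \pi(G) > 0\}$ as follows: from state $G$, with probability $1-b$ stay at $G$; with probability $b$, draw a pair $ij$ with probability $b_{ij}/b$ and move to $G^{ij}$ if $G^{ij}$ is acyclic, otherwise stay at $G$. Assume: (1) $\pi(G) > 0$ for every DAG $G$ with exactly one arc; (2) every DAG $G$ with $\pi(G) > 0$ and at least one arc has an arc whose removal yields a DAG $G'$ with $\pi(G') > 0$; (3) $q_{ij} > 0$ for all ordered pairs $ij$; (4) $q_{ij} = q_{ji}$ for all pairs. Then the chain is irreducible and aperiodic on $\Omega$, and the distribution $\pi(G)/Z$ with $Z = \sum_{G} \pi(G)$ (sum over all DAGs on $N$) is a stationary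 distribution satisfying detailed balance; consequently the chain converges to $\pi/Z$ from any initial state in $\Omega$.
   Context: A DAG is a directed acyclic graph; directed graphs here have no self-loops and at most one arc per ordered pair. Note that $b \leq \sum_{ij} q_{ij} = 1$, so the transition rule is well defined. *)

From HB Require Import structures.
From mathcomp Require Import all_boot all_order all_algebra.
From mathcomp Require Import all_classical all_reals all_analysis.
Set Implicit Arguments. Unset Strict Implicit. Unset Printing Implicit Defensive.
Import Order.TTheory GRing.Theory Num.Theory.
Local Open Scope ring_scope.

Section DagMCMC.
Variable (R : realType) (n : nat).

Definition darc := ('I_n * 'I_n)%type.
Definition dgraph := {set darc}.

Definition loopless (A : dgraph) : bool := [forall i : 'I_n, (i, i) \notin A].

Definition darc_rel (A : dgraph) : rel 'I_n := fun x y => (x, y) \in A.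

Definition acyclic (A : dgraph) : bool :=
  [forall a in A, ~~ connect (darc_rel A) a.2 a.1].

Definition is_dag (A : dgraph) : bool := loopless A && acyclic A.

Definition parents (A : dgraph) (i : 'I_n) : {set 'I_n} := [set j | (j, i) \in A].

Variable pi : 'I_n -> {set 'I_n} -> R.

Definition pistar (A : dgraph) : R := \prod_(i : 'I_n) pi i (parents A i).
Definition piG (A : dgraph) : R := if acyclic A then pistar A else 0.

Definition flip (A : dgraph) (i j : 'I_n) : dgraph :=
  if (i, j) \in A then A :\ (i, j)
  else if (j, i) \in A then (A :\ (j, i)) :|: [set (i, j)]
  else (i, j) |: A.

Variable q : 'I_n -> 'I_n -> R.

Definition bij (A : dgraph) (i j : 'I_n) : R :=
  q i j * Num.min 1 (pistar (flip A i j) / piG A).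

Definition btot (A : dgraph) : R := \sum_(p : darc | p.1 != p.2) bij A p.1 p.2.

Definition Omega (A : dgraph) : bool := is_dag A && (0 < piG A).

Definition trans (G H : dgraph) : R :=
  \sum_(p : darc | (p.1 != p.2) && (flip G p.1 p.2 == H) && acyclic H) bij G p.1 p.2
  + (if H == G then
       (1 - btot G) +
       \sum_(p : darc | (p.1 != p.2) && ~~ acyclic (flip G p.1 p.2)) bij G p.1 p.2
     else 0).

Fixpoint transn (t : nat) (G H : dgraph) : R :=
  match t with
  | 0 => (G == H)%:R
  | t'.+1 => \sum_(K : dgraph | Omega K) transn t' G K * trans K H
  end.

Definition irreducible : Prop :=
  forall G H, Omega G -> Omega H -> exists t, 0 < transn t G H.

Definition aperiodic : Prop :=
  forall G, Omega G -> forall d : nat,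
    (forall t : nat, (0 < t)%N -> 0 < transn t G G -> (d %| t)%N) -> d = 1%N.

Definition Zc : R := \sum_(A : dgraph | is_dag A) piG A.

End DagMCMC.

(* The chain is the Metropolis chain of the symmetric proposal [q], so detailed
   balance with respect to [pi] is the identity a min(1, b/a) = b min(1, a/b).
   By (2) every state can be emptied one arc at a time, and each deletion is undone
   by re-adding the arc, so all states communicate through the empty graph, which
   lies in Omega by (1) and (2). The empty graph returns to itself in 2 steps (add
   and delete an arc) and in 3 steps (add it, reverse it, delete it), whence
   aperiodicity. Hence a fixed power of the kernel is entrywise positive, and the
   Doeblin contraction of the column oscillations gives convergence to pi / Z. *)

From Pilot Require Import Defs.
From HB Require Import structures.
From mathcomp Require Import all_boot all_order all_algebra.
From mathcomp Require Import all_classical all_reals all_analysis.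
From mathcomp Require Import ring lra zify.
Set Implicit Arguments. Unset Strict Implicit. Unset Printing Implicit Defensive.
Import Order.TTheory GRing.Theory Num.Theory.
Import numFieldNormedType.Exports.
Local Open Scope classical_set_scope.
Local Open Scope ring_scope.

Lemma sum_weighted_bounds (R : realDomainType) (S : finType) (D : pred S)
    (w f : S -> R) (m M : R) :
  (forall z, D z -> 0 <= w z) -> (forall z, D z -> m <= f z <= M) ->
  (\sum_(z | D z) w z) * m <= \sum_(z | D z) w z * f z <= (\sum_(z | D z) w z) * M.
Proof.
move=> w_ge0 f_bnd; rewrite !mulr_suml.
by apply/andP; split; apply: ler_sum => z Dz; rewrite ler_wpM2l ?w_ge0 //;
  case/andP: (f_bnd z Dz).
Qed.

Section KernelPower.
Variables (R : realFieldType) (S : finType) (D : pred S) (P : S -> S -> R).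

Fixpoint kpow (t : nat) (x y : S) : R :=
  if t is t'.+1 then \sum_(z | D z) kpow t' x z * P z y else (x == y)%:R.

Lemma kpow1 x y : D x -> kpow 1 x y = P x y.
Proof.
move=> Dx; rewrite /= (bigD1 x) //= eqxx mul1r big1 ?addr0 // => z /andP[_ zx].
by rewrite eq_sym (negbTE zx) mul0r.
Qed.

Lemma kpowD s t x y : D y ->
  kpow (s + t) x y = \sum_(z | D z) kpow s x z * kpow t z y.
Proof.
elim: t y => [|t IH] y Dy.
  rewrite addn0 /= (bigD1 y) //= eqxx mulr1 big1 ?addr0 // => z /andP[_ zy].
  by rewrite (negbTE zy) mulr0.
rewrite addnS /=; under eq_bigr => z Dz do rewrite IH // mulr_suml.
rewrite exchange_big /=; apply: eq_bigr => z _; rewrite mulr_sumr.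
by apply: eq_bigr => u _; rewrite mulrA.
Qed.

Lemma kpow_aperiodic x s : (0 < s)%N -> 0 < kpow s x x -> 0 < kpow s.+1 x x ->
  forall d, (forall t, (0 < t)%N -> 0 < kpow t x x -> (d %| t)%N) -> d = 1%N.
Proof.
move=> s_gt0 xs xs1 d d_per; apply/eqP; rewrite -dvdn1.
by rewrite -(dvdn_addr 1 (d_per s s_gt0 xs)) addn1 d_per.
Qed.

Hypothesis P_ge0 : forall x y, 0 <= P x y.

Lemma kpow_ge0 t x y : 0 <= kpow t x y.
Proof.
elim: t y => [|t IH] y /=; first by rewrite ler0n.
by apply: sumr_ge0 => z _; rewrite mulr_ge0.
Qed.

Lemma kpow_gt0_trans s t x z y : D z -> D y ->
  0 < kpow s x z -> 0 < kpow t z y -> 0 < kpow (s + t) x y.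
Proof.
move=> Dz Dy xz zy; rewrite kpowD // (bigD1 z) //=.
by rewrite ltr_pwDl ?mulr_gt0 // sumr_ge0 // => u _; rewrite mulr_ge0 ?kpow_ge0.
Qed.

Hypothesis P_sum1 : forall x, D x -> \sum_(y | D y) P x y = 1.

Lemma kpow_sum1 t x : D x -> \sum_(y | D y) kpow t x y = 1.
Proof.
move=> Dx; elim: t => [|t IH].
  rewrite /= (bigD1 x) //= eqxx big1 ?addr0 // => y /andP[_ yx].
  by rewrite eq_sym (negbTE yx).
rewrite /= exchange_big /= -[RHS]IH; apply: eq_bigr => z Dz.
by rewrite -mulr_sumr P_sum1 ?mulr1.
Qed.

Section Stationary.
Variable w : S -> R.

Lemma balance_stationary y :
  (forall x y, D x -> D y -> w x * P x y = w y * P y x) ->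
  D y -> \sum_(x | D x) w x * P x y = w y.
Proof.
move=> bal Dy; under eq_bigr => x Dx do rewrite bal //.
by rewrite -mulr_sumr P_sum1 ?mulr1.
Qed.

Lemma stationary_kpow t y :
  (forall y, D y -> \sum_(x | D x) w x * P x y = w y) ->
  D y -> \sum_(x | D x) w x * kpow t x y = w y.
Proof.
move=> stat; elim: t y => [|t IH] y Dy.
  rewrite (bigD1 y) //= eqxx mulr1 big1 ?addr0 // => x /andP[_ xy].
  by rewrite (negbTE xy) mulr0.
rewrite /=; under eq_bigr => x _ do rewrite mulr_sumr.
rewrite exchange_big /= -[RHS]stat //; apply: eq_bigr => z Dz.
by rewrite -IH // mulr_suml; apply: eq_bigr => x _; rewrite mulrA.
Qed.

End Stationary.
End KernelPower.

Section Doeblin.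
Variables (R : realType) (S : finType) (D : pred S) (P : S -> S -> R).
Hypothesis P_ge0 : forall x y, 0 <= P x y.
Hypothesis P_sum1 : forall x, D x -> \sum_(y | D y) P x y = 1.
Variable w : S -> R.
Hypothesis w_ge0 : forall x, D x -> 0 <= w x.
Hypothesis w_sum1 : \sum_(x | D x) w x = 1.
Hypothesis w_stationary : forall y, D y -> \sum_(x | D x) w x * P x y = w y.
Variable T : nat.
Hypothesis T_gt0 : (0 < T)%N.
Hypothesis kpowT_gt0 : forall x y, D x -> D y -> 0 < kpow D P T x y.

Local Notation Pn := (kpow D P).

(* Doeblin minorization: after [T] steps every state carries mass at least [e],
   so the oscillation of each column shrinks by the factor [rho = 1 - #|D| e]. *)
Lemma doeblin_contraction x0 : D x0 ->
  exists2 rho, 0 <= rho < 1 & forall t y m M, D y ->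
    (forall z, D z -> m <= Pn t z y <= M) ->
    exists m' M', M' - m' <= rho * (M - m) /\
      forall x, D x -> m' <= Pn (T + t) x y <= M'.
Proof.
move=> Dx0; pose e := \big[Num.min/1]_(a : S * S | D a.1 && D a.2) Pn T a.1 a.2.
have e_gt0 : 0 < e by apply: lt_bigmin => // -[x z] /andP[]; apply: kpowT_gt0.
have e_le x z : D x -> D z -> e <= Pn T x z.
  by move=> Dx Dz; apply: (@bigmin_le_cond _ _ _ 1 (x, z)); rewrite /= Dx Dz.
pose rho := 1 - \sum_(z | D z) e.
have rho_sum x : D x -> \sum_(z | D z) (Pn T x z - e) = rho.
  by move=> Dx; rewrite sumrB kpow_sum1.
exists rho.
  have Se_gt0 : 0 < \sum_(z | D z) e.
    by rewrite (bigD1 x0) //= ltr_pwDl // sumr_ge0 // => z _; rewrite ltW.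
  apply/andP; split; last by rewrite /rho ltrBlDr ltrDl.
  by rewrite -(rho_sum x0) // sumr_ge0 // => z Dz; rewrite subr_ge0 e_le.
move=> t y m M Dy bnd; pose c := e * \sum_(z | D z) Pn t z y.
exists (c + rho * m), (c + rho * M); split=> [|x Dx].
  by rewrite opprD addrACA subrr add0r -mulrBr.
rewrite kpowD //.
have -> : \sum_(z | D z) Pn T x z * Pn t z y =
    c + \sum_(z | D z) (Pn T x z - e) * Pn t z y.
  by rewrite /c mulr_sumr -big_split /=; apply: eq_bigr => z _; ring.
rewrite !lerD2l -(rho_sum x Dx); apply: sum_weighted_bounds => // z Dz.
by rewrite subr_ge0 e_le.
Qed.

Lemma kpow_dist_stationary x0 : D x0 ->
  exists2 rho, 0 <= rho < 1 &
    forall t x y, D x -> D y -> `|w y - Pn t x y| <= rho ^+ (t %/ T).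
Proof.
move=> Dx0; have [rho /andP[rho_ge0 rho_lt1] contract] := doeblin_contraction Dx0.
exists rho; first by rewrite rho_ge0.
have osc k y : D y -> exists m M, M - m <= rho ^+ k /\
    forall x, D x -> m <= Pn (k * T) x y <= M.
  move=> Dy; elim: k => [|k [m [M [osc_k bnd_k]]]].
    exists 0, 1; rewrite subr0 expr0; split=> // x _.
    by rewrite /=; case: (x == y); rewrite ?ler01 lexx.
  have [m' [M' [osc' bnd']]] := contract _ _ _ _ Dy bnd_k.
  exists m', M'; rewrite mulSn exprS; split=> //.
  by apply: le_trans osc' _; rewrite ler_wpM2l.
move=> t x y Dx Dy; have [m [M [osc_t bnd]]] := osc (t %/ T)%N y Dy.
have w_bnd : m <= w y <= M.
  have := sum_weighted_bounds w_ge0 bnd.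
  by rewrite w_sum1 !mul1r stationary_kpow.
have Pn_bnd : m <= Pn t x y <= M.
  have := sum_weighted_bounds (fun z _ => kpow_ge0 D P_ge0 (t %% T) x z) bnd.
  by rewrite kpow_sum1 // !mul1r -kpowD // addnC -divn_eq.
apply: le_trans osc_t; rewrite ler_norml.
by case/andP: w_bnd; case/andP: Pn_bnd => *; apply/andP; split; lra.
Qed.

Lemma kpow_cvg x y : D x -> D y -> Pn t x y @[t --> \oo] --> w y.
Proof.
move=> Dx Dy; have [rho /andP[rho_ge0 rho_lt1] dist] := kpow_dist_stationary Dx.
apply/cvgrPdist_lt => eps eps_gt0.
have rho_norm : `|rho| < 1 by rewrite ger0_norm.
have /cvgr_dist_lt/(_ eps eps_gt0) [N _ rhoN] := cvg_expr rho_norm.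
exists (N * T)%N => // t /= Nt; apply: le_lt_trans (dist t x y Dx Dy) _.
have := rhoN (t %/ T)%N; rewrite /= sub0r normrN ger0_norm ?exprn_ge0 //.
by apply; rewrite leq_divRL.
Qed.
End Doeblin.

Section Flip.
Variable n : nat.
Local Open Scope set_scope.
Implicit Types (G : dgraph n) (i j : 'I_n) (x : darc n).

Lemma mem_flip_self G i j : ((i, j) \in flip G i j) = ((i, j) \notin G).
Proof.
rewrite /flip; case: ifP => ijG; first by rewrite !inE eqxx.
by case: ifP => _; rewrite !inE ?eqxx ?orbT ?ijG.
Qed.

Lemma mem_flip_other G i j x : x != (i, j) -> x != (j, i) ->
  (x \in flip G i j) = (x \in G).
Proof.
move=> xij xji; rewrite /flip; case: ifP => _; first by rewrite !inE xij.
by case: ifP => _; rewrite !inE ?(negbTE xij) ?(negbTE xji) /= ?orbF ?andbT.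
Qed.

Lemma mem_flip_rev G i j : i != j ->
  ((j, i) \in flip G i j) = ((j, i) \in G) && ((i, j) \in G).
Proof.
move=> ij; have jiij : (j, i) != (i, j) by rewrite xpair_eqE negb_and eq_sym ij.
rewrite /flip; case: ifP => ijG; first by rewrite !inE jiij andbT.
by case: ifP => jiG; rewrite !inE ?eqxx ?(negbTE jiij) ?jiG.
Qed.

Lemma flip_neq G i j : flip G i j != G.
Proof. by apply/eqP => E; have := mem_flip_self G i j; rewrite E; case: (_ \in G). Qed.

Lemma flip_inj G i j k l : i != j -> k != l ->
  flip G i j = flip G k l -> (i, j) = (k, l).
Proof.
move=> ij kl E; apply/eqP/negPn/negP => ijkl.
have mem_eq x := congr1 (fun H : dgraph n => x \in H) E.
case: (eqVneq (k, l) (j, i)) => [[kj li] | klji]; first subst k l.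
  move: (mem_eq (i, j)) (mem_eq (j, i)) => /=.
  rewrite mem_flip_self mem_flip_rev 1?eq_sym // mem_flip_self mem_flip_rev //.
  by case: ((i, j) \in G); case: ((j, i) \in G).
have klij : (k, l) != (i, j) by rewrite eq_sym.
move: (mem_eq (k, l)) => /=; rewrite mem_flip_self mem_flip_other //.
by case: ((k, l) \in G).
Qed.

Lemma acyclic_antisym G i j : acyclic G -> (i, j) \in G -> (j, i) \notin G.
Proof.
move=> /forallP acG ijG; apply/negP => jiG.
by have := acG (i, j); rewrite ijG /= => /negP; apply; apply: connect1.
Qed.

Lemma flip_mem G i j : (i, j) \in G -> flip G i j = G :\ (i, j).
Proof. by rewrite /flip => ->. Qed.

Lemma flip_setD1 G i j : (i, j) \in G -> (j, i) \notin G -> flip (G :\ (i, j)) i j = G.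
Proof.
move=> ijG jiG; rewrite /flip !inE eqxx /= (negbTE jiG) andbF.
by rewrite finset.setD1K.
Qed.

Lemma flip_undo G i j : acyclic G -> i != j ->
  exists2 x, x \in [:: (i, j); (j, i)] & flip (flip G i j) x.1 x.2 = G.
Proof.
move=> acG ij; have ji : j != i by rewrite eq_sym.
have [jiG | jiG] := boolP ((j, i) \in G); [exists (j, i) | exists (i, j)];
  rewrite ?inE ?eqxx ?orbT //=; apply/setP => x.
  have ijG := acyclic_antisym acG jiG.
  have [->|xij] := eqVneq x (i, j); first by rewrite !mem_flip_rev // (negbTE ijG) !andbF.
  have [->|xji] := eqVneq x (j, i); first by rewrite mem_flip_self mem_flip_rev // jiG.
  by rewrite !mem_flip_other // eq_sym.
have [->|xij] := eqVneq x (i, j); first by rewrite !mem_flip_self negbK.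
have [->|xji] := eqVneq x (j, i); first by rewrite !mem_flip_rev // (negbTE jiG).
by rewrite !mem_flip_other.
Qed.

Lemma loopless_flip G i j : loopless G -> i != j -> loopless (flip G i j).
Proof.
move=> /forallP loopG ij; apply/forallP => k.
rewrite mem_flip_other ?loopG // xpair_eqE; apply: contra ij => /andP[/eqP <- /eqP <-] //.
Qed.

Lemma flip_set0 i j : flip finset.set0 i j = [set (i, j)].
Proof. by rewrite /flip !inE finset.setU0. Qed.

Lemma flip_set1 i j : flip [set (i, j)] i j = finset.set0.
Proof. by rewrite flip_mem ?finset.set11 // finset.setDv. Qed.

Lemma flip_set1_rev i j : i != j -> flip [set (i, j)] j i = [set (j, i)].
Proof.
move=> ij; rewrite /flip !inE xpair_eqE eq_sym (negbTE ij) /= eqxx.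
by apply/setP => x; rewrite !inE andNb.
Qed.

Lemma loopless_setD1 G x : loopless G -> loopless (G :\ x).
Proof. by move=> /forallP loopG; apply/forallP => k; rewrite inE negb_and loopG orbT. Qed.

Lemma is_dag_set0 : is_dag (finset.set0 : dgraph n).
Proof. by apply/andP; split; apply/forallP => ?; rewrite inE. Qed.

Lemma is_dag_set1 i j : i != j -> is_dag [set (i, j)].
Proof.
move=> ij; apply/andP; split.
  by apply/forallP => k; rewrite inE xpair_eqE; apply: contra ij => /andP[/eqP <- /eqP <-].
apply/forallP => x; apply/implyP; rewrite inE => /eqP -> /=.
apply/negP => /connectP[[|k p] /= arcs last_j]; first by rewrite last_j eqxx in ij.
by move: arcs; rewrite /darc_rel inE xpair_eqE => /andP[/andP[/eqP ji _] _]; rewrite ji eqxx in ij.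
Qed.
End Flip.

Lemma metropolis_balance (R : realFieldType) (a b c : R) : 0 < a -> 0 < b ->
  a * (c * Num.min 1 (b / a)) = b * (c * Num.min 1 (a / b)).
Proof.
move=> a_gt0 b_gt0; have [ab|/ltW ba] := lerP a b.
  rewrite min_l ?min_r ?ler_pdivlMr ?ler_pdivrMr ?mul1r //.
  by field; rewrite lt0r_neq0.
rewrite min_r ?min_l ?ler_pdivlMr ?ler_pdivrMr ?mul1r //.
by field; rewrite lt0r_neq0.
Qed.

Section DagChain.
Variables (R : realType) (n : nat) (pi : 'I_n -> {set 'I_n} -> R) (q : 'I_n -> 'I_n -> R).
Hypothesis pi_ge0 : forall i (S : {set 'I_n}), 0 <= pi i S.
Hypothesis q_ge0 : forall i j, 0 <= q i j.
Hypothesis q_sum1 : \sum_(p : darc n | p.1 != p.2) q p.1 p.2 = 1.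
Local Open Scope set_scope.
Implicit Types (G H K : dgraph n) (i j : 'I_n).

Local Notation Om := (Omega pi).
Local Notation P := (trans pi q).
Local Notation b := (Defs.bij pi q).

Lemma pistar_ge0 G : 0 <= pistar pi G.
Proof. exact: prodr_ge0. Qed.

Lemma piG_ge0 G : 0 <= piG pi G.
Proof. by rewrite /piG; case: ifP => // _; apply: pistar_ge0. Qed.

Lemma piG_acyclic G : acyclic G -> piG pi G = pistar pi G.
Proof. by rewrite /piG => ->. Qed.

Lemma piG_gt0_acyclic G : 0 < piG pi G -> acyclic G.
Proof. by rewrite /piG; case: ifP; rewrite ?ltxx. Qed.

Lemma Omega_gt0 G : Om G -> 0 < piG pi G.
Proof. by case/andP. Qed.

Lemma Omega_acyclic G : Om G -> acyclic G.
Proof. by move/Omega_gt0/piG_gt0_acyclic. Qed.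

Lemma Omega_loopless G : Om G -> loopless G.
Proof. by case/andP => /andP[]. Qed.

Lemma bij_ge0 G i j : 0 <= b G i j.
Proof. by rewrite mulr_ge0 // le_min ler01 divr_ge0 ?pistar_ge0 ?piG_ge0. Qed.

Lemma bij_le G i j : b G i j <= q i j.
Proof. by rewrite -[leRHS]mulr1 ler_wpM2l // ge_min lexx. Qed.

Lemma btot_le1 G : btot pi q G <= 1.
Proof. by rewrite -q_sum1; apply: ler_sum => p _; apply: bij_le. Qed.

Lemma trans_ge0 G H : 0 <= P G H.
Proof.
rewrite addr_ge0 //; first by apply: sumr_ge0 => p _; apply: bij_ge0.
case: eqP => // _; rewrite addr_ge0 ?subr_ge0 ?btot_le1 //.
by apply: sumr_ge0 => p _; apply: bij_ge0.
Qed.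

Lemma bij_out G i j : i != j -> Om G -> acyclic (flip G i j) -> ~~ Om (flip G i j) ->
  b G i j = 0.
Proof.
move=> ij OG ac; rewrite /Omega /is_dag loopless_flip ?Omega_loopless // ac /= -leNgt => le0.
have pi0 : piG pi (flip G i j) = 0 by apply/eqP; rewrite eq_le le0 piG_ge0.
by rewrite /Defs.bij -piG_acyclic // pi0 mul0r min_r ?mulr0.
Qed.

Lemma sum_trans_moves G : Om G ->
  \sum_(K | Om K) \sum_(p : darc n | (p.1 != p.2) && (flip G p.1 p.2 == K) && acyclic K)
     b G p.1 p.2
  = \sum_(p : darc n | (p.1 != p.2) && acyclic (flip G p.1 p.2)) b G p.1 p.2.
Proof.
move=> OG; rewrite (exchange_big_dep (fun p : darc n => p.1 != p.2)) /=; last first.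
  by move=> K p _ /andP[/andP[]].
rewrite [RHS]big_mkcondr /=; apply: eq_bigr => p ij.
case: (boolP (Om (flip G p.1 p.2))) => Oflip.
  rewrite (Omega_acyclic Oflip) (big_pred1 (flip G p.1 p.2)) // => K /=.
  apply/idP/eqP => [/and3P[_ /andP[_ /eqP <-] _] // | ->].
  by rewrite Oflip ij eqxx Omega_acyclic.
rewrite big_pred0 => [|K]; first by case: ifP => // ac; rewrite bij_out.
by apply/negP => /and3P[OK /andP[_ /eqP KE] _]; rewrite KE OK in Oflip.
Qed.

Lemma trans_sum1 G : Om G -> \sum_(K | Om K) P G K = 1.
Proof.
move=> OG; rewrite big_split /= sum_trans_moves // -big_mkcondr (big_pred1 G) => [|K].
  rewrite /btot [X in 1 - X](bigID (fun p : darc n => acyclic (flip G p.1 p.2))) /=.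
  ring.
by rewrite andb_idl // => /eqP ->.
Qed.

Lemma trans_flip G i j : i != j -> acyclic (flip G i j) -> P G (flip G i j) = b G i j.
Proof.
move=> ij ac; rewrite /trans (negbTE (flip_neq G i j)) addr0.
rewrite (big_pred1 (i, j)) // => -[k l] /=; rewrite ac andbT.
apply/andP/eqP => [[kl /eqP/esym/(flip_inj ij kl) ->] // | [-> ->]].
by rewrite ij eqxx.
Qed.

Lemma trans_nomove G H : G != H -> (forall i j, i != j -> flip G i j != H) -> P G H = 0.
Proof.
move=> GH nomove; rewrite /trans eq_sym (negbTE GH) addr0 big_pred0 // => -[i j] /=.
by apply/negP => /andP[/andP[ij fH] _]; move: (nomove _ _ ij); rewrite fH.
Qed.

Hypothesis q_sym : forall i j, q i j = q j i.

Lemma flip_reverse G i j : acyclic G -> i != j ->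
  exists k l, [/\ k != l, q k l = q i j & flip (flip G i j) k l = G].
Proof.
move=> acG ij; have [[k l] kl_in undo] := flip_undo acG ij.
exists k, l; move: kl_in undo; rewrite !inE => /orP[] /eqP[-> ->] undo //.
by rewrite eq_sym q_sym.
Qed.

Lemma trans_balance G H : Om G -> Om H -> piG pi G * P G H = piG pi H * P H G.
Proof.
move=> OG OH; have [-> // | GH] := eqVneq G H.
have [acG acH] := (Omega_acyclic OG, Omega_acyclic OH).
case: (pickP (fun p : darc n => (p.1 != p.2) && (flip G p.1 p.2 == H)))
  => [[i j] /andP[/= ij /eqP GH_move] | nomove].
  have [k [l [kl q_kl HG_move]]] := flip_reverse acG ij; rewrite GH_move in HG_move.
  have -> : P G H = b G i j by rewrite -GH_move trans_flip // GH_move.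
  have -> : P H G = b H k l by rewrite -HG_move trans_flip // HG_move.
  rewrite /Defs.bij GH_move HG_move q_kl -(piG_acyclic acG) -(piG_acyclic acH).
  exact: metropolis_balance (Omega_gt0 OG) (Omega_gt0 OH).
have nomove' i j : i != j -> flip G i j != H.
  by move=> ij; have := nomove (i, j); rewrite /= ij /= => ->.
have noback k l : k != l -> flip H k l != G.
  move=> kl; apply/eqP => HG_move; have [i [j [ij _ GH_move]]] := flip_reverse acH kl.
  by rewrite HG_move in GH_move; move/eqP: (nomove' i j ij).
by rewrite !trans_nomove ?mulr0 // eq_sym.
Qed.

Hypothesis q_gt0 : forall i j, i != j -> 0 < q i j.

Lemma trans_flip_gt0 G i j : i != j -> Om G -> Om (flip G i j) -> 0 < P G (flip G i j).
Proof.
move=> ij OG Oflip; rewrite trans_flip ?Omega_acyclic // mulr_gt0 ?q_gt0 //.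
by rewrite lt_min ltr01 -piG_acyclic ?Omega_acyclic // divr_gt0 ?Omega_gt0.
Qed.

(* [transn pi q] is definitionally [kpow Om P]. *)
Local Notation Pn := (kpow Om P).

Lemma kpow1_flip_gt0 G i j : i != j -> Om G -> Om (flip G i j) -> 0 < Pn 1 G (flip G i j).
Proof. by move=> ij OG Oflip; rewrite kpow1 // trans_flip_gt0. Qed.

Lemma Omega_setD1 G x : Om G -> 0 < piG pi (G :\ x) -> Om (G :\ x).
Proof.
move=> OG pos; rewrite /Omega /is_dag loopless_setD1 ?Omega_loopless //.
by rewrite piG_gt0_acyclic.
Qed.

Hypothesis piG_single_arc : forall G, is_dag G -> #|G| = 1%N -> 0 < piG pi G.
Hypothesis piG_remove_arc : forall G, is_dag G -> 0 < piG pi G -> G != finset.set0 ->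
  exists2 x, x \in G & 0 < piG pi (G :\ x).

Lemma Omega_set1 i j : i != j -> Om [set (i, j)].
Proof. by move=> ij; rewrite /Omega is_dag_set1 // piG_single_arc ?is_dag_set1 ?cards1. Qed.

Hypothesis n_ge2 : (2 <= n)%N.

Lemma exists_two_nodes : exists i j : 'I_n, i != j.
Proof. by exists (Ordinal (ltnW n_ge2)), (Ordinal n_ge2). Qed.

Lemma Omega_set0 : Om finset.set0.
Proof.
have [i [j ij]] := exists_two_nodes.
have set1_neq0 : [set (i, j)] != finset.set0 :> dgraph n.
  by rewrite -finset.cards_eq0 finset.cards1.
have [x] := piG_remove_arc (is_dag_set1 ij) (Omega_gt0 (Omega_set1 ij)) set1_neq0.
by rewrite inE => /eqP -> pos; rewrite /Omega is_dag_set0 -(finset.setDv [set (i, j)]).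
Qed.

Lemma kpow_to_from_set0 G : Om G ->
  0 < Pn #|G| G finset.set0 /\ 0 < Pn #|G| finset.set0 G.
Proof.
move cardG : #|G| => k; elim: k G cardG => [|k IH] G cardG OG.
  by rewrite (finset.cards0_eq cardG) /= eqxx ltr01.
have G_neq0 : G != finset.set0 by rewrite -finset.cards_eq0 cardG.
have [[i j] ijG pos] := piG_remove_arc (andP OG).1 (Omega_gt0 OG) G_neq0.
have OG' := Omega_setD1 OG pos.
have ij : i != j by apply: contraTneq ijG => ->; move/forallP: (Omega_loopless OG) => ->.
have [to0 from0] : 0 < Pn k (G :\ (i, j)) finset.set0 /\ 0 < Pn k finset.set0 (G :\ (i, j)).
  by apply: IH OG'; move: cardG; rewrite (finset.cardsD1 (i, j)) ijG => -[].
have := kpow1_flip_gt0 ij OG; rewrite flip_mem // => /(_ OG') down.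
have := kpow1_flip_gt0 ij OG'.
rewrite flip_setD1 ?(acyclic_antisym (Omega_acyclic OG)) // => /(_ OG) up.
split; [rewrite -add1n | rewrite -addn1].
  exact: (kpow_gt0_trans (D := Om) trans_ge0 OG' Omega_set0 down to0).
exact: (kpow_gt0_trans (D := Om) trans_ge0 OG' OG from0 up).
Qed.

Lemma kpow_set0_gt0 k : (1 < k)%N -> 0 < Pn k finset.set0 finset.set0.
Proof.
have [i [j ij]] := exists_two_nodes; have ji : j != i by rewrite eq_sym.
have O0 := Omega_set0; have Oij := Omega_set1 ij; have Oji := Omega_set1 ji.
have add_arc : 0 < Pn 1 finset.set0 [set (i, j)].
  by rewrite -flip_set0 kpow1_flip_gt0 // flip_set0.
have del_arc (x y : 'I_n) : x != y -> Om [set (x, y)] -> 0 < Pn 1 [set (x, y)] finset.set0.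
  by move=> xy Oxy; rewrite -(flip_set1 x y) kpow1_flip_gt0 // flip_set1.
have rev_arc : 0 < Pn 1 [set (i, j)] [set (j, i)].
  by rewrite -(flip_set1_rev ij) kpow1_flip_gt0 // flip_set1_rev.
have ret2 : 0 < Pn 2 finset.set0 finset.set0.
  exact: (kpow_gt0_trans (D := Om) trans_ge0 Oij O0 add_arc (del_arc _ _ ij Oij)).
have ret3 : 0 < Pn 3 finset.set0 finset.set0.
  have := kpow_gt0_trans (D := Om) trans_ge0 Oij Oji add_arc rev_arc.
  by move/(kpow_gt0_trans (D := Om) trans_ge0 Oji O0)/(_ (del_arc _ _ ji Oji)).
elim/ltn_ind: k => -[|[|[|[|k]]]] IH // _.
by rewrite -addn2; apply: (kpow_gt0_trans (D := Om) trans_ge0 O0 O0 (IH k.+2 _ _) ret2).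
Qed.

Lemma kpow_gt0 G H k : Om G -> Om H -> (1 < k)%N -> 0 < Pn (#|G| + k + #|H|) G H.
Proof.
move=> OG OH k_gt1; have O0 := Omega_set0.
have [to0 _] := kpow_to_from_set0 OG; have [_ from0] := kpow_to_from_set0 OH.
apply: (kpow_gt0_trans (D := Om) trans_ge0 O0 OH _ from0).
exact: (kpow_gt0_trans (D := Om) trans_ge0 O0 O0 to0 (kpow_set0_gt0 k_gt1)).
Qed.

Lemma dag_irreducible : irreducible pi q.
Proof. by move=> G H OG OH; exists (#|G| + 2 + #|H|)%N; apply: kpow_gt0. Qed.

Lemma dag_aperiodic : aperiodic pi q.
Proof.
move=> G OG; apply: (kpow_aperiodic (s := #|G| + 2 + #|G|)); first by rewrite addn_gt0 addn2.
  exact: kpow_gt0.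
by rewrite -addSn -addnS; apply: kpow_gt0.
Qed.

Lemma dgraph_card_le G : (#|G| <= n * n)%N.
Proof. by apply: leq_trans (max_card _) _; rewrite card_prod card_ord. Qed.

Lemma kpow_uniform_gt0 G H : Om G -> Om H -> 0 < Pn (n * n + 2 + n * n) G H.
Proof.
move=> OG OH; have G_le := dgraph_card_le G; have H_le := dgraph_card_le H.
have -> : (n * n + 2 + n * n = #|G| + (n * n + 2 + n * n - #|G| - #|H|) + #|H|)%N by lia.
by apply: kpow_gt0 => //; lia.
Qed.

Lemma Zc_Omega : Zc pi = \sum_(G | Om G) piG pi G.
Proof.
rewrite /Zc (bigID (fun G => 0 < piG pi G)) /= [X in _ + X]big1 ?addr0 // => G /andP[_].
by rewrite -leNgt => le0; apply/eqP; rewrite eq_le le0 piG_ge0.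
Qed.

Lemma Zc_gt0 : 0 < Zc pi.
Proof.
rewrite Zc_Omega (bigD1 _ Omega_set0) /= ltr_pwDl ?Omega_gt0 ?Omega_set0 //.
by rewrite sumr_ge0 // => G _; apply: piG_ge0.
Qed.

Lemma piG_normalized_ge0 G : 0 <= piG pi G / Zc pi.
Proof. by rewrite divr_ge0 ?piG_ge0 ?ltW ?Zc_gt0. Qed.

Lemma piG_normalized_sum1 : \sum_(G | Om G) piG pi G / Zc pi = 1.
Proof. by rewrite -mulr_suml -Zc_Omega divff // lt0r_neq0 // Zc_gt0. Qed.

Lemma dag_balance G H : Om G -> Om H ->
  (piG pi G / Zc pi) * P G H = (piG pi H / Zc pi) * P H G.
Proof. by move=> OG OH; rewrite mulrAC trans_balance // mulrAC. Qed.

Lemma dag_stationary H : Om H ->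
  \sum_(G | Om G) (piG pi G / Zc pi) * P G H = piG pi H / Zc pi.
Proof. by apply: (balance_stationary trans_sum1); apply: dag_balance. Qed.

Lemma dag_cvg G H : Om G -> Om H ->
  transn pi q t G H @[t --> \oo] --> piG pi H / Zc pi.
Proof.
apply: (kpow_cvg trans_ge0 trans_sum1 (fun G _ => piG_normalized_ge0 G)
  piG_normalized_sum1 dag_stationary _ kpow_uniform_gt0).
by rewrite addn_gt0 addn2.
Qed.

End DagChain.

Theorem mainTheorem5 (R : realType) (n : nat) (pi : 'I_n -> {set 'I_n} -> R)
    (q : 'I_n -> 'I_n -> R) :
  (2 <= n)%N ->
  (forall i (S : {set 'I_n}), 0 <= pi i S) ->
  (forall i j, 0 <= q i j) ->
  \sum_(p : darc n | p.1 != p.2) q p.1 p.2 = 1 ->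
  (* (1) *)
  (forall G : dgraph n, is_dag G -> #|G| = 1%N -> 0 < piG pi G) ->
  (* (2) *)
  (forall G : dgraph n, is_dag G -> 0 < piG pi G -> G != finset.set0 ->
     exists2 a, a \in G & 0 < piG pi (G :\ a)) ->
  (* (3) *)
  (forall i j : 'I_n, i != j -> 0 < q i j) ->
  (* (4) *)
  (forall i j : 'I_n, q i j = q j i) ->
  [/\ irreducible pi q /\ aperiodic pi q,
      0 < Zc pi /\ \sum_(G : dgraph n | Omega pi G) piG pi G / Zc pi = 1,
      (forall H : dgraph n, Omega pi H ->
         \sum_(G : dgraph n | Omega pi G) (piG pi G / Zc pi) * trans pi q G H
         = piG pi H / Zc pi),
      (forall G H : dgraph n, Omega pi G -> Omega pi H ->
         (piG pi G / Zc pi) * trans pi q G H = (piG pi H / Zc pi) * trans pi q H G)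
    & (forall G0 H : dgraph n, Omega pi G0 -> Omega pi H ->
         transn pi q t G0 H @[t --> \oo] --> piG pi H / Zc pi)].
Proof.
move=> n_ge2 pi_ge0 q_ge0 q_sum1 single_arc remove_arc q_gt0 q_sym.
split.
- split; [exact: dag_irreducible | exact: dag_aperiodic].
- split; [exact: Zc_gt0 | exact: piG_normalized_sum1].
- exact: dag_stationary.
- exact: dag_balance.
- exact: dag_cvg.
Qed.
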